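(* Let $M$ be a graded $R$-module. The following are equivalent: (1) For all $Q,P\in qp.Spec_g(M)$, if $qp\text{-}V_M^g(Q)=qp\text{-}V_M^g(P)$ then $Q=P$. (2) $|qp.Spec_g^p(M)|\le 1$ for every $p\in Spec_g(R)$. (3) The natural map $\varphi$ is injective.
   Context: $R=\bigoplus_{g\in G}R_g$ is a graded commutative ring with identity graded by a group $G$, $h(R)=\bigcup_g R_g$; $M$ is a graded $R$-module, $h(M)$ its homogeneous elements. $Gr(I)$ is the graded radical of a graded ideal $I$ (elements all of whose homogeneous components have a power in $I$). $Spec_g(R)$: graded prime ideals. $(K:_RM)=\{r: rM\subseteq K\}$. Graded prime submodule: proper graded $P$ with $rm\in P$ ($r\in h(R), m\in h(M)$) implying $m\in P$ or $r\in(P:_RM)$. $Gr_M(K)$: intersection of graded prime submodules containing $K$ ($M$ if none). Graded primeful property of $K$: for each graded prime $p\supseteq(K:_RM)$ there is a graded prime submodule $P\supseteq K$ with $(P:_RM)=p$. Graded quasi-primary submodule: proper graded $Q$ with $rm\in Q$ ($r\in h(R),m\in h(M)$) implying $r\in Gr((Q:_RM))$ or $m\in Gr_M(Q)$. $qp.Spec_g(M)$: graded quasi-primary submodules with the graded primeful property; $qp.Spec_g^p(M)=\{Q\in qp.Spec_g(M): Gr((Q:_RM))=p\}$. $qp\text{-}V_M^g(K)=\{Q\in qp.Spec_g(M): Gr((Q:_RM))\supseteq Gr((K:_RM))\}$. $\overline R=R/\mathrm{Ann}(M)$ and $\overline I=I/\mathrm{Ann}(M)$ for ideals $I\supseteq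 \mathrm{Ann}(M)$. For $Q\in qp.Spec_g(M)$, $(Gr_M(Q):_RM)=Gr((Q:_RM))$ is a graded prime ideal of $R$ containing $\mathrm{Ann}(M)$; the natural map $\varphi:qp.Spec_g(M)\to Spec_g(\overline R)$ is $\varphi(Q)=\overline{(Gr_M(Q):_RM)}$. *)

From HB Require Import structures.
From mathcomp Require Import all_boot all_order all_algebra.
From Stdlib Require List.
Set Implicit Arguments. Unset Strict Implicit. Unset Printing Implicit Defensive.
Import GRing.Theory.
Local Open Scope ring_scope.

Definition is_group (G : Type) (mul : G -> G -> G) (e : G) (inv : G -> G) : Prop :=
  (forall a b c, mul a (mul b c) = mul (mul a b) c) /\
  (forall a, mul e a = a) /\
  (forall a, mul (inv a) a = e).

(* ---------- graded abelian groups via component maps ----------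
   comp g x is the g-homogeneous component of x; X_g := {x | comp g x = x}.
   The axioms say exactly that X = (+)_g X_g (internal direct sum). *)
Definition is_decomp (G : Type) (V : zmodType) (comp : G -> V -> V) : Prop :=
  (forall g x y, comp g (x + y) = comp g x + comp g y) /\
  (forall g x, comp g (comp g x) = comp g x) /\
  (forall g h x, g <> h -> comp h (comp g x) = 0) /\
  (forall x, exists s : seq G, List.NoDup s /\
       x = \sum_(g <- s) comp g x /\ (forall h, ~ List.In h s -> comp h x = 0)).

Definition graded_ring (G : Type) (mul : G -> G -> G) (R : comPzRingType)
    (cR : G -> R -> R) : Prop :=
  is_decomp cR /\
  (forall g h (x y : R),
      cR (mul g h) (cR g x * cR h y) = cR g x * cR h y).

Definition graded_module (G : Type) (mul : G -> G -> G) (R : comPzRingType)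
    (M : lmodType R) (cR : G -> R -> R) (cM : G -> M -> M) : Prop :=
  is_decomp cM /\
  (forall g h (r : R) (m : M),
      cM (mul g h) (cR g r *: cM h m) = cR g r *: cM h m).

Section GradedDefs.
Variables (G : Type) (R : comPzRingType) (M : lmodType R).
Variables (cR : G -> R -> R) (cM : G -> M -> M).

Definition subset {T : Type} (A B : T -> Prop) : Prop := forall x, A x -> B x.

Definition homR (r : R) : Prop := exists g, cR g r = r.
Definition homM (m : M) : Prop := exists g, cM g m = m.

Definition is_ideal (I : R -> Prop) : Prop :=
  I 0 /\ (forall x y, I x -> I y -> I (x + y)) /\
  (forall r x, I x -> I (r * x)).

Definition graded_ideal (I : R -> Prop) : Prop :=
  is_ideal I /\ (forall x g, I x -> I (cR g x)).

Definition graded_prime_ideal (p : R -> Prop) : Prop :=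
  graded_ideal p /\ ~ p 1 /\
  (forall a b, homR a -> homR b -> p (a * b) -> p a \/ p b).

Definition Gr (I : R -> Prop) : R -> Prop :=
  fun r => forall g, exists n : nat, I (cR g r ^+ n).

Definition is_submodule (N : M -> Prop) : Prop :=
  N 0 /\ (forall x y, N x -> N y -> N (x + y)) /\
  (forall (r : R) x, N x -> N (r *: x)).

Definition graded_submodule (N : M -> Prop) : Prop :=
  is_submodule N /\ (forall x g, N x -> N (cM g x)).

Definition proper (N : M -> Prop) : Prop := exists m, ~ N m.

Definition colon (K : M -> Prop) : R -> Prop :=
  fun r => forall m : M, K (r *: m).

Definition Ann : R -> Prop := fun r => forall m : M, r *: m = 0.

Definition graded_prime_submodule (P : M -> Prop) : Prop :=
  graded_submodule P /\ proper P /\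
  (forall r m, homR r -> homM m -> P (r *: m) -> P m \/ colon P r).

(* Gr_M(K): intersection of graded prime submodules containing K
   (equal to M when there is none) *)
Definition GrM (K : M -> Prop) : M -> Prop :=
  fun m => forall P, graded_prime_submodule P -> subset K P -> P m.

Definition graded_primeful (K : M -> Prop) : Prop :=
  forall p, graded_prime_ideal p -> subset (colon K) p ->
    exists P, graded_prime_submodule P /\ subset K P /\ colon P = p.

Definition graded_quasi_primary (Q : M -> Prop) : Prop :=
  graded_submodule Q /\ proper Q /\
  (forall r m, homR r -> homM m -> Q (r *: m) -> Gr (colon Q) r \/ GrM Q m).

Definition qpSpec (Q : M -> Prop) : Prop :=
  graded_quasi_primary Q /\ graded_primeful Q.

Definition qpSpec_p (p : R -> Prop) (Q : M -> Prop) : Prop :=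
  qpSpec Q /\ Gr (colon Q) = p.

Definition qpV (K : M -> Prop) (Q : M -> Prop) : Prop :=
  qpSpec Q /\ subset (Gr (colon K)) (Gr (colon Q)).

(* the natural map phi(Q) = (Gr_M(Q) :_R M) / Ann(M), where the quotient
   R/Ann(M) is presented by a surjective ring morphism pi with kernel Ann(M) *)
Definition phi (Rbar : comPzRingType) (pi : R -> Rbar) (Q : M -> Prop) : Rbar -> Prop :=
  fun y => exists r, colon (GrM Q) r /\ pi r = y.

End GradedDefs.

(* For Q in qp.Spec_g(M), graded primefulness and the graded Krull lemma (a graded
   ideal avoiding the powers of x lies in a graded prime avoiding x) give
   Gr((Q :_R M)) = (Gr_M(Q) :_R M), and the quasi-primary condition, tested on
   homogeneous components, makes this ideal a graded prime.  Hence
   qp-V(Q) = qp-V(P) iff Gr((Q :_R M)) = Gr((P :_R M)); and since ker pi = Ann(M) lies in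
   every (Gr_M(P) :_R M), phi(Q) = phi(P) iff (Gr_M(Q) :_R M) = (Gr_M(P) :_R M).  So all
   three conditions say that Q |-> Gr((Q :_R M)) is injective on qp.Spec_g(M). *)

From Pilot Require Import Defs.
From HB Require Import structures.
From mathcomp Require Import all_boot all_order all_algebra ring.
From mathcomp Require classical_sets.
From Stdlib Require Import Classical FunctionalExtensionality PropExtensionality.
Import GRing.Theory.
Local Open Scope ring_scope.

Set Implicit Arguments. Unset Strict Implicit. Unset Printing Implicit Defensive.

Lemma predext (T : Type) (A B : T -> Prop) : (forall y, A y <-> B y) -> A = B.
Proof.
move=> AB; apply: functional_extensionality => y; exact: propositional_extensionality.
Qed.

Section Group.
Variables (G : Type) (mul : G -> G -> G) (e : G) (inv : G -> G).
Hypothesis Hg : is_group mul e inv.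

Let gmulA a b c : mul a (mul b c) = mul (mul a b) c. Proof. by case: Hg. Qed.
Let gmul1g a : mul e a = a. Proof. by case: Hg => _ []. Qed.
Let gmulVg a : mul (inv a) a = e. Proof. by case: Hg => _ []. Qed.

Let gmulgV a : mul a (inv a) = e.
Proof.
rewrite -[LHS]gmul1g -{1}(gmulVg (inv a)) -gmulA (gmulA (inv a)) gmulVg gmul1g.
exact: gmulVg.
Qed.

Let gmulg1 a : mul a e = a.
Proof. by rewrite -(gmulVg a) gmulA gmulgV gmul1g. Qed.

Lemma gmulKV g h : mul (mul g (inv h)) h = g.
Proof. by rewrite -gmulA gmulVg gmulg1. Qed.

Lemma gmulIg h : injective (fun g => mul g h).
Proof. by move=> g k /= /(congr1 (mul^~ (inv h))); rewrite -!gmulA gmulgV !gmulg1. Qed.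

End Group.

Section Decomposition.
Variables (G : Type) (V : zmodType) (comp : G -> V -> V).
Hypothesis Hd : is_decomp comp.

Lemma compD g x y : comp g (x + y) = comp g x + comp g y.
Proof. by case: Hd. Qed.

Lemma compK g x : comp g (comp g x) = comp g x.
Proof. by case: Hd => _ []. Qed.

Lemma comp_orth g h x : g <> h -> comp h (comp g x) = 0.
Proof. by case: Hd => _ [_ [hO _]]; apply: hO. Qed.

Lemma sum_comp x : exists s : seq G, x = \sum_(g <- s) comp g x.
Proof. by case: Hd => _ [_ [_ /(_ x) [s [_ [xs _]]]]]; exists s. Qed.

Lemma comp0 g : comp g 0 = 0.
Proof. by apply: (addrI (comp g 0)); rewrite -compD !addr0. Qed.

Lemma compB g x y : comp g (x - y) = comp g x - comp g y.
Proof. by rewrite -[in RHS](subrK y x) compD addrK. Qed.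

Lemma comp_sum g (I : Type) (s : seq I) (f : I -> V) :
  comp g (\sum_(i <- s) f i) = \sum_(i <- s) comp g (f i).
Proof. exact: (big_morph (comp g) (compD g) (comp0 g)). Qed.

Lemma comp_homog_eq0 g h x : comp g x = x -> g <> h -> comp h x = 0.
Proof. by move=> <- /comp_orth ->. Qed.

End Decomposition.

Section GradedAction.
Variables (G : Type) (mul : G -> G -> G) (e : G) (inv : G -> G).
Variables (R : comPzRingType) (M : lmodType R) (cR : G -> R -> R) (cM : G -> M -> M).
Hypotheses (Hg : is_group mul e inv) (HRd : is_decomp cR) (HM : graded_module mul cR cM).

(* Only the [g]-component of [r] can contribute to the [g h]-component of [r *: m]. *)
Lemma comp_scale_homog h g r m : cM h m = m -> cM (mul g h) (r *: m) = cR g r *: m.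
Proof.
case: HM => HMd HMs hm.
have rest0 : cM (mul g h) ((r - cR g r) *: m) = 0.
  have y0 : cR g (r - cR g r) = 0 by rewrite compB // compK // subrr.
  have [s ->] := sum_comp HRd (r - cR g r).
  rewrite scaler_suml comp_sum //; apply: big1 => k _.
  case: (classic (k = g)) => [-> | kg]; first by rewrite y0 scale0r comp0.
  by rewrite -hm -HMs comp_orth // => /(gmulIg Hg)/kg.
by rewrite -{1}(subrK (cR g r) r) scalerDl compD // rest0 add0r -{1}hm HMs hm.
Qed.

End GradedAction.

Lemma comp_mul_homog (G : Type) (mul : G -> G -> G) (e : G) (inv : G -> G)
    (R : comPzRingType) (cR : G -> R -> R) :
  is_group mul e inv -> graded_ring mul cR ->
  forall h g (r a : R), cR h a = a -> cR (mul g h) (r * a) = cR g r * a.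
Proof.
move=> Hg [HRd HRm] h g r a; exact: (comp_scale_homog (M := R^o) Hg HRd (conj HRd HRm)).
Qed.

Section Graded.
Variables (G : Type) (mul : G -> G -> G) (e : G) (inv : G -> G).
Variables (R : comPzRingType) (M : lmodType R) (cR : G -> R -> R) (cM : G -> M -> M).
Hypotheses (Hg : is_group mul e inv) (HR : graded_ring mul cR)
  (HM : graded_module mul cR cM).

Let HRd : is_decomp cR := proj1 HR.
Let HMd : is_decomp cM := proj1 HM.

Lemma homR_comp g r : homR cR (cR g r).
Proof. by exists g; rewrite compK. Qed.

Lemma homM_comp k m : homM cM (cM k m).
Proof. by exists k; rewrite compK. Qed.

Lemma homR_mul a b : homR cR a -> homR cR b -> homR cR (a * b).
Proof.
by move=> [g ha] [h hb]; exists (mul g h); rewrite (comp_mul_homog Hg HR) // ha.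
Qed.

Lemma homR_expr y n : homR cR y -> homR cR (y ^+ n.+1).
Proof.
by move=> hy; elim: n => [|n IH]; [rewrite expr1 | rewrite exprS; apply: homR_mul].
Qed.

Lemma homM_scale r m : homR cR r -> homM cM m -> homM cM (r *: m).
Proof.
by move=> [g hr] [h hm]; exists (mul g h); rewrite (comp_scale_homog Hg HRd HM) // hr.
Qed.

Lemma ideal_sum (I : R -> Prop) (T : Type) (s : seq T) (f : T -> R) :
  is_ideal I -> (forall k, I (f k)) -> I (\sum_(k <- s) f k).
Proof. by move=> [I0 [ID _]] If; apply: big_ind. Qed.

Lemma submodule_scale_comps (N : M -> Prop) r m :
  is_submodule N -> (forall k, N (r *: cM k m)) -> N (r *: m).
Proof.
move=> [N0 [ND _]] Nk; have [s ->] := sum_comp HMd m.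
by rewrite scaler_sumr; apply: big_ind.
Qed.

Lemma colon_ideal (N : M -> Prop) : is_submodule N -> is_ideal (colon N).
Proof.
move=> [N0 [ND NZ]]; split; [|split].
- by move=> m; rewrite scale0r.
- by move=> x y Nx Ny m; rewrite scalerDl; apply: ND.
- by move=> r x Nx m; rewrite -scalerA; apply: NZ.
Qed.

Lemma colon_graded_ideal (N : M -> Prop) :
  graded_submodule cM N -> graded_ideal cR (colon N).
Proof.
move=> [sN Ncomp]; split; first exact: colon_ideal.
move=> r g Nr m; apply: submodule_scale_comps => // h.
rewrite -(comp_scale_homog Hg HRd HM g r (compK HMd h m)); exact/Ncomp/Nr.
Qed.

Lemma GrM_graded_submodule K : graded_submodule cM (GrM cR cM K).
Proof.
split; [split; [|split]|].
- by move=> P [[[]]].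
- move=> x y Px Py P hP KP; have [[[_ [ND _]] _] _] := hP.
  exact: ND (Px P hP KP) (Py P hP KP).
- move=> r x Px P hP KP; have [[[_ [_ NZ]] _] _] := hP; exact: NZ (Px P hP KP).
- move=> x g Px P hP KP; have [[_ Ncomp] _] := hP; exact: Ncomp (Px P hP KP).
Qed.

Lemma colon_graded_prime P :
  graded_prime_submodule cR cM P -> graded_prime_ideal cR (colon P).
Proof.
move=> [gP [[m0 Pm0] Pprime]]; split; first exact: colon_graded_ideal.
split; first by move=> P1; apply: Pm0; rewrite -[m0]scale1r; apply: P1.
move=> a b ha hb Pab; case: (classic (colon P a)) => [|Pa]; [by left | right].
move=> m; apply: submodule_scale_comps => [|k]; first exact: gP.1.
case: (Pprime a (b *: cM k m) ha) => //.
- exact/homM_scale/homM_comp.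
- by rewrite scalerA; apply: Pab.
Qed.

Lemma Gr_homogE (I : R -> Prop) y :
  I 0 -> homR cR y -> Gr cR I y <-> exists n, I (y ^+ n).
Proof.
move=> I0 [g hy]; split=> [/(_ g) | [n Iyn] h]; first by rewrite hy.
case: (classic (g = h)) => [<- | gh]; first by rewrite hy; exists n.
by exists 1%N; rewrite expr1 (comp_homog_eq0 HRd hy gh).
Qed.

Lemma Gr_expr (I : R -> Prop) y n :
  I 0 -> homR cR y -> Gr cR I (y ^+ n.+1) -> Gr cR I y.
Proof.
move=> I0 hy /(Gr_homogE I0 (homR_expr n hy)) [k]; rewrite -exprM => Iyk.
by apply/(Gr_homogE I0 hy); exists (n.+1 * k)%N.
Qed.

Lemma graded_prime_expr (p : R -> Prop) y n :
  graded_prime_ideal cR p -> homR cR y -> p (y ^+ n) -> p y.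
Proof.
move=> [_ [p1 pprime]] hy; case: n => [|n]; first by rewrite expr0.
elim: n => [|n IH]; first by rewrite expr1.
by rewrite exprS => /pprime; case=> //; apply: homR_expr.
Qed.

Lemma Gr_sub_graded_prime (I p : R -> Prop) :
  graded_prime_ideal cR p -> Defs.subset I p -> Defs.subset (Gr cR I) p.
Proof.
move=> pp Ip r Ir; have [s ->] := sum_comp HRd r.
apply: ideal_sum => [|g]; first exact: pp.1.1.
have [n Irn] := Ir g.
exact: graded_prime_expr pp (homR_comp g r) (Ip _ Irn).
Qed.

Lemma graded_ideal_addMr (J : R -> Prop) k c : graded_ideal cR J -> cR k c = c ->
  graded_ideal cR (fun y => exists j r, J j /\ y = j + r * c).
Proof.
move=> [[J0 [JD JM]] Jcomp] hc; split; [split; [|split]|].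
- by exists 0, 0; rewrite mul0r addr0.
- move=> _ _ [j1 [r1 [J1 ->]]] [j2 [r2 [J2 ->]]]; exists (j1 + j2), (r1 + r2).
  by split; [apply: JD | rewrite mulrDl addrACA].
- move=> t _ [j [r [Jj ->]]]; exists (t * j), (t * r).
  by split; [apply: JM | rewrite mulrDr mulrA].
- move=> _ g [j [r [Jj ->]]]; exists (cR g j), (cR (mul g (inv k)) r).
  split; first exact: Jcomp.
  by rewrite compD // -(comp_mul_homog Hg HR _ _ hc) (gmulKV Hg).
Qed.

Section GradedKrull.
Variables (I : R -> Prop) (x : R).
Hypotheses (hI : graded_ideal cR I) (hx : forall n, ~ I (x ^+ n)).

Let admissible (J : R -> Prop) :=
  graded_ideal cR J /\ Defs.subset I J /\ forall n, ~ J (x ^+ n).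

Lemma admissible_chain_union (F : (R -> Prop) -> Prop) J0 :
  (forall J y, F J -> J y -> admissible J) ->
  classical_sets.total_on F classical_sets.subset -> F J0 -> admissible J0 ->
  admissible (fun y => exists2 J, F J & J y).
Proof.
move=> Fadm Ftot FJ0 [[[J00 _] _] [IJ0 _]].
split; [split; [split; [|split]|] | split].
- by exists J0.
- move=> a b [J1 F1 J1a] [J2 F2 J2b].
  have [J12 | J21] := Ftot J1 J2 F1 F2.
  + exists J2 => //; have [[[_ [JD _]] _] _] := Fadm J2 b F2 J2b; exact/JD/J2b/J12.
  + exists J1 => //; have [[[_ [JD _]] _] _] := Fadm J1 a F1 J1a; exact/JD/J21.
- move=> r a [J FJ Ja]; exists J => //; have [[[_ [_ JM]] _] _] := Fadm J a FJ Ja.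
  exact: JM.
- move=> a g [J FJ Ja]; exists J => //; have [[_ Jcomp] _] := Fadm J a FJ Ja.
  exact: Jcomp.
- by move=> y Iy; exists J0 => //; apply: IJ0.
- by move=> n [J FJ Jxn]; have [_ [_ /(_ n)]] := Fadm J _ FJ Jxn.
Qed.

(* The empty set is admitted as a bottom element so that empty chains have an
   upper bound. *)
Lemma exists_maximal_admissible :
  exists A, admissible A /\ forall B, classical_sets.proper A B -> ~ admissible B.
Proof.
pose P J := admissible J \/ J = (fun _ => False).
have [A [PA Amax]] : exists A, P A /\ forall B, classical_sets.proper A B -> ~ P B.
  apply: classical_sets.Zorn_bigcup => F FP Ftot.
  have Fadm J y : F J -> J y -> admissible J by move=> /FP [// | ->].
  case: (classic (exists2 J, F J & admissible J)) => [[J0 FJ0 aJ0] | noadm].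
    by left; exact: (admissible_chain_union Fadm Ftot FJ0 aJ0).
  right; apply: predext => y; split=> // [[J FJ Jy]].
  by apply: noadm; exists J; last exact: Fadm Jy.
have aI : admissible I by split=> //; split=> // y.
have aA : admissible A.
  case: PA => // A0; exfalso; apply: (Amax I); last by left.
  by split=> [y | IA]; [rewrite A0 | have := IA 0 hI.1.1; rewrite A0].
by exists A; split=> // B AB aB; apply: (Amax B AB); left.
Qed.

Lemma maximal_admissible_prime A : admissible A ->
  (forall B, classical_sets.proper A B -> ~ admissible B) -> graded_prime_ideal cR A.
Proof.
move=> [gA [IA xA]] Amax; have [[A0 [AD AM]] _] := gA.
split=> //; split=> [A1 | a b ha hb Aab]; first by apply: (xA 0%N); rewrite expr0.
have escape c : homR cR c -> ~ A c -> exists n j r, A j /\ x ^+ n = j + r * c.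
  move=> [k hc] Ac; apply: NNPP => noesc.
  apply: (Amax (fun y => exists j r, A j /\ y = j + r * c)).
    split=> [y Ay | /(_ c) Bc]; first by exists y, 0; rewrite mul0r addr0.
    by apply/Ac/Bc; exists 0, 1; rewrite add0r mul1r.
  split; first exact: graded_ideal_addMr hc.
  split=> [y Iy | n [j [r [Aj xn]]]]; last by apply: noesc; exists n, j, r.
  by exists y, 0; split; [apply: IA | rewrite mul0r addr0].
apply: NNPP => /not_or_and [Aa Ab].
have [n [j1 [r1 [Aj1 xn]]]] := escape a ha Aa.
have [m [j2 [r2 [Aj2 xm]]]] := escape b hb Ab.
apply: (xA (n + m)%N); rewrite exprD xn xm.
have -> : (j1 + r1 * a) * (j2 + r2 * b) =
          (j2 + r2 * b) * j1 + (r1 * a) * j2 + (r1 * r2) * (a * b) by ring.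
by apply: (AD); first apply: (AD); apply: (AM).
Qed.

Lemma exists_graded_prime_avoiding_powers :
  exists p, graded_prime_ideal cR p /\ Defs.subset I p /\ ~ p x.
Proof.
have [A [aA Amax]] := exists_maximal_admissible.
exists A; split; first exact: maximal_admissible_prime.
by split=> [|Ax]; [exact: aA.2.1 | apply: (aA.2.2 1%N); rewrite expr1].
Qed.

End GradedKrull.

Section QuasiPrimary.
Variable Q : M -> Prop.
Hypothesis hQ : qpSpec cR cM Q.

Let colonQ_graded : graded_ideal cR (colon Q) := colon_graded_ideal hQ.1.1.

Lemma qpSpec_colon1 : ~ colon Q 1.
Proof. by case: hQ.1.2.1 => m Qm /(_ m); rewrite scale1r. Qed.

(* [>=]: graded primefulness lifts a graded prime over [(Q : M)] avoiding the
   powers of [cR g r] to a prime submodule over [Q]. *)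
Lemma Gr_colon_qpSpec : Gr cR (colon Q) = colon (GrM cR cM Q).
Proof.
apply: predext => r; split=> [Gr_r m P hP QP | GrMr g].
  apply: (Gr_sub_graded_prime (colon_graded_prime hP) _ Gr_r) => s Qs m'.
  exact/QP/Qs.
apply: NNPP => /(not_ex_all_not _ _) Qn.
have [p [pp [Qp prg]]] := exists_graded_prime_avoiding_powers colonQ_graded Qn.
have [P [hP [QP PM]]] := hQ.2 p pp Qp.
by apply: prg; rewrite -PM; apply: (colon_graded_ideal hP.1).2 => m; apply: GrMr.
Qed.

Lemma Gr_colon_qpSpec_prime : graded_prime_ideal cR (Gr cR (colon Q)).
Proof.
have Q0 : colon Q 0 := colonQ_graded.1.1.
split; first by rewrite Gr_colon_qpSpec; apply/colon_graded_ideal/GrM_graded_submodule.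
split.
  have Q1n n : ~ colon Q (1 ^+ n) by rewrite expr1n; apply: qpSpec_colon1.
  have [p [pp [Qp p1]]] := exists_graded_prime_avoiding_powers colonQ_graded Q1n.
  by move/(Gr_sub_graded_prime pp Qp).
move=> a b ha hb Gab; case: (classic (Gr cR (colon Q) b)) => [|Gb]; [by right | left].
have [[|n] Qabn] := (Gr_homogE Q0 (homR_mul ha hb)).1 Gab.
  by rewrite expr0 in Qabn; case: qpSpec_colon1.
have GrMbn : ~ colon (GrM cR cM Q) (b ^+ n.+1).
  by rewrite -Gr_colon_qpSpec => /(Gr_expr Q0 hb).
have [m GrMbm] := not_all_ex_not _ _ GrMbn.
have [k GrMbmk] : exists k, ~ GrM cR cM Q (b ^+ n.+1 *: cM k m).
  apply: NNPP => /(not_ex_not_all _ _) GrMbmk; apply: GrMbm.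
  exact: submodule_scale_comps (GrM_graded_submodule Q).1 GrMbmk.
have hbm : homM cM (b ^+ n.+1 *: cM k m) by apply/homM_scale/homM_comp/homR_expr.
have Qabm : Q (a ^+ n.+1 *: (b ^+ n.+1 *: cM k m)).
  by rewrite scalerA -exprMn; apply: Qabn.
case: (hQ.1.2.2 _ _ (homR_expr n ha) hbm Qabm) => [Gan | //].
exact: Gr_expr Q0 ha Gan.
Qed.

End QuasiPrimary.

End Graded.

Lemma qpV_eq (G : Type) (R : comPzRingType) (M : lmodType R)
    (cR : G -> R -> R) (cM : G -> M -> M) Q P :
  qpSpec cR cM Q -> qpSpec cR cM P ->
  qpV cR cM Q = qpV cR cM P <-> Gr cR (colon Q) = Gr cR (colon P).
Proof.
move=> hQ hP; split=> [E | E]; last by rewrite /qpV E.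
have [_ PQ] : qpV cR cM P Q by rewrite -E; split=> // r.
have [_ QP] : qpV cR cM Q P by rewrite E; split=> // r.
by apply: predext => r; split; [apply: QP | apply: PQ].
Qed.

Section NaturalMap.
Variables (G : Type) (R : comPzRingType) (M : lmodType R).
Variables (cR : G -> R -> R) (cM : G -> M -> M).
Variables (Rbar : comPzRingType) (pi : {rmorphism R -> Rbar}).
Hypothesis ker_pi : forall r, pi r = 0 <-> Ann M r.

Lemma phiP Q r : phi cR cM pi Q (pi r) <-> colon (GrM cR cM Q) r.
Proof.
split=> [[s [GrMs pisr]] | GrMr]; last by exists r.
have [[N0 _] _] := GrM_graded_submodule cR cM Q.
have [_ [CD _]] := colon_ideal (GrM_graded_submodule cR cM Q).1.
have Ann_rs : Ann M (r - s) by apply/ker_pi; rewrite rmorphB pisr subrr.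
by rewrite -(subrK s r); apply: CD => // m; rewrite Ann_rs.
Qed.

Lemma phi_eq Q P :
  phi cR cM pi Q = phi cR cM pi P <-> colon (GrM cR cM Q) = colon (GrM cR cM P).
Proof.
split=> [E | E]; last by rewrite /phi E.
by apply: predext => r; split=> /phiP GrMr; apply/phiP; [rewrite -E | rewrite E].
Qed.

End NaturalMap.

Theorem theorem3p7 (G : Type) (mul : G -> G -> G) (e : G) (inv : G -> G)
    (R : comPzRingType) (M : lmodType R) (cR : G -> R -> R) (cM : G -> M -> M)
    (Rbar : comPzRingType) (pi : {rmorphism R -> Rbar}) :
  is_group mul e inv ->
  graded_ring mul cR ->
  graded_module mul cR cM ->
  (forall y : Rbar, exists r : R, pi r = y) ->
  (forall r : R, pi r = 0 <-> Ann M r) ->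
  let s1 := forall Q P : M -> Prop, qpSpec cR cM Q -> qpSpec cR cM P ->
              qpV cR cM Q = qpV cR cM P -> Q = P in
  let s2 := forall p : R -> Prop, graded_prime_ideal cR p ->
              forall Q P : M -> Prop, qpSpec_p cR cM p Q -> qpSpec_p cR cM p P -> Q = P in
  let s3 := forall Q P : M -> Prop, qpSpec cR cM Q -> qpSpec cR cM P ->
              phi cR cM pi Q = phi cR cM pi P -> Q = P in
  (s1 <-> s2) /\ (s2 <-> s3).
Proof.
move=> Hg HR HM _ ker_pi s1 s2 s3.
pose Gr_colon_inj := forall Q P, qpSpec cR cM Q -> qpSpec cR cM P ->
  Gr cR (colon Q) = Gr cR (colon P) -> Q = P.
have s1E : s1 <-> Gr_colon_inj.
  by split=> inj Q P hQ hP /(qpV_eq hQ hP); apply: inj.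
have s2E : s2 <-> Gr_colon_inj.
  split=> inj.
    move=> Q P hQ hP E.
    by apply: (inj _ (Gr_colon_qpSpec_prime Hg HR HM hQ)); split; rewrite ?E.
  by move=> p _ Q P [hQ <-] [hP EP]; apply: inj; rewrite ?EP.
have s3E : s3 <-> Gr_colon_inj.
  split=> inj Q P hQ hP.
    by rewrite !(Gr_colon_qpSpec Hg HR HM) // -(phi_eq _ _ ker_pi); apply: inj.
  by rewrite (phi_eq _ _ ker_pi) -!(Gr_colon_qpSpec Hg HR HM) //; apply: inj.
tauto.
Qed.
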